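(* Let $L$ be the graph obtained from the line graph $L(K_{5,6})$ of the complete bipartite graph $K_{5,6}$ by adding, for every edge $uv$ of $L(K_{5,6})$, a new vertex adjacent exactly to $u$ and $v$. Let $L\overline{L}$ be the disjoint union of $L$ and its complement $\overline L$. Then $L\overline{L}$ is $\cap$-triangle.
   Context: A graph $G$ is triangle if for every maximal stable set $S$ of $G$ and every edge $uv$ of $G$ with $u,v\notin S$, there is $s\in S$ adjacent to both $u$ and $v$. A graph is $\cap$-triangle if both it and its complement are triangle. *)

From mathcomp Require Import all_boot.
Set Implicit Arguments. Unset Strict Implicit. Unset Printing Implicit Defensive.

(* A simple graph is a finite type T with a symmetric irreflexive relation. *)

Definition stable (T : finType) (e : rel T) (S : {set T}) : Prop :=
  forall x y, x \in S -> y \in S -> ~~ e x y.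

Definition maximal_stable (T : finType) (e : rel T) (S : {set T}) : Prop :=
  stable e S /\ (forall S' : {set T}, stable e S' -> S \subset S' -> S' = S).

Definition triangle (T : finType) (e : rel T) : Prop :=
  forall S : {set T}, maximal_stable e S ->
  forall u v, e u v -> u \notin S -> v \notin S ->
  exists2 s, s \in S & e s u && e s v.

Definition compl_rel (T : finType) (e : rel T) : rel T :=
  fun x y => (x != y) && ~~ e x y.

Definition cap_triangle (T : finType) (e : rel T) : Prop :=
  triangle e /\ triangle (compl_rel e).

Definition union_rel (T1 T2 : finType) (e1 : rel T1) (e2 : rel T2)
  : rel (T1 + T2)%type :=
  fun x y => match x, y with
  | inl a, inl b => e1 a b
  | inr a, inr b => e2 a b
  | _, _ => false
  end.

(* Line graph of K_{5,6}: vertices are the edges (i,j) of K_{5,6},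
   adjacent iff distinct and sharing an endpoint. *)
Definition LK : finType := ('I_5 * 'I_6)%type.
Definition LK_adj : rel LK :=
  fun x y => (x != y) && ((x.1 == y.1) || (x.2 == y.2)).

Definition is_LK_edge (E : {set LK}) : bool :=
  [exists u, exists v, LK_adj u v && (E == [set u; v])].
Definition LK_edge : finType := {E : {set LK} | is_LK_edge E}.

Definition Lvert : finType := (LK + LK_edge)%type.
Definition L_adj : rel Lvert :=
  fun x y => match x, y with
  | inl a, inl b => LK_adj a b
  | inl a, inr E => a \in val E
  | inr E, inl a => a \in val E
  | inr _, inr _ => false
  end.

Definition LLbar_adj : rel (Lvert + Lvert)%type :=
  union_rel L_adj (compl_rel L_adj).

From mathcomp Require Import all_boot.
Set Implicit Arguments. Unset Strict Implicit. Unset Printing Implicit Defensive.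

(* A maximal stable set of a disjoint union consists of maximal stable sets
   of the two parts, so triangle graphs are closed under disjoint union. In the
   complement of a disjoint union every left vertex is adjacent to every right
   one, so a maximal stable set lies on one side and is maximal there; an edge
   leaving that side is covered by a vertex dominating its end on that side.
   So it suffices that L and its complement are triangle.
   For an edge ab of L(K_{5,6}) outside a maximal stable set S, the
   subdivision vertex of ab is in S, for otherwise its only neighbours a, b
   would have to meet S; edges at subdivision vertices work the same way.
   A maximal stable set of the complement is a maximal clique of L: either a
   triangle {a, b, ab}, whose subdivision vertex sees nothing outside it, or a
   full star of K_{5,6}, which has at least five vertices while any vertex
   outside it is adjacent to at most two of them. *)

Definition triangle_at (T : finType) (e : rel T) (S : {set T}) : Prop :=
  forall u v, e u v -> u \notin S -> v \notin S ->
  exists2 s, s \in S & e s u && e s v.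

Definition clique (T : finType) (e : rel T) (S : {set T}) : Prop :=
  {in S &, forall x y, x != y -> e x y}.

Section Complement.
Variables (T : finType) (e : rel T).

Lemma compl_rel_irr : irreflexive (compl_rel e).
Proof. by move=> x; rewrite /compl_rel eqxx. Qed.

Lemma compl_rel_sym : symmetric e -> symmetric (compl_rel e).
Proof. by move=> e_sym x y; rewrite /compl_rel eq_sym e_sym. Qed.

Lemma compl_relK : irreflexive e -> compl_rel (compl_rel e) =2 e.
Proof.
move=> e_irr x y; rewrite /compl_rel.
by case: eqVneq => [->|] /=; rewrite ?e_irr ?negbK.
Qed.

Lemma stable_compl_clique S : stable (compl_rel e) S <-> clique e S.
Proof.
split=> [stS x y xS yS xy | clS x y xS yS].
  by have := stS x y xS yS; rewrite /compl_rel xy negbK.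
by rewrite /compl_rel negb_and negbK; case: eqVneq => //= xy; rewrite clS.
Qed.

End Complement.

Lemma compl_rel_mono (T1 T2 : finType) (e1 : rel T1) (e2 : rel T2) (f : T1 -> T2) :
  injective f -> {mono f : x y / e1 x y >-> e2 x y} ->
  {mono f : x y / compl_rel e1 x y >-> compl_rel e2 x y}.
Proof. by move=> f_inj f_mono x y; rewrite /compl_rel inj_eq // f_mono. Qed.

Lemma maximal_stable_dominating (T : finType) (e : rel T) S w :
  irreflexive e -> symmetric e -> maximal_stable e S -> w \notin S ->
  exists2 x, x \in S & e x w.
Proof.
move=> e_irr e_sym [stS maxS] wS; apply/exists_inP.
apply: contraNT wS => /exists_inPn noN.
have stSw : stable e (w |: S).
  move=> x y; rewrite !in_setU1 => /predU1P[-> | xS] /predU1P[-> | yS].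
  - by rewrite e_irr.
  - by rewrite e_sym noN.
  - exact: noN.
  - exact: stS.
by rewrite -(maxS _ stSw (subsetUr _ _)) setU11.
Qed.

Lemma stable_preimage (T1 T2 : finType) (e1 : rel T1) (e2 : rel T2) (f : T1 -> T2) S :
  {mono f : x y / e1 x y >-> e2 x y} -> stable e2 S -> stable e1 (f @^-1: S).
Proof. by move=> f_mono stS x y; rewrite !inE -f_mono; apply: stS. Qed.

Section Isomorphism.
Variables (T1 T2 : finType) (e1 : rel T1) (e2 : rel T2) (f : T1 -> T2) (g : T2 -> T1).
Hypotheses (f_mono : {mono f : x y / e1 x y >-> e2 x y}) (fK : cancel f g) (gK : cancel g f).

Lemma maximal_stable_preimage (S : {set T2}) :
  maximal_stable e2 S -> maximal_stable e1 (f @^-1: S).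
Proof.
move=> [stS maxS]; split=> [|S' stS' sub]; first exact: stable_preimage.
have g_mono : {mono g : x y / e2 x y >-> e1 x y} by move=> x y; rewrite -f_mono !gK.
have defS : g @^-1: S' = S.
  apply: maxS; first exact: stable_preimage g_mono stS'.
  by apply/subsetP=> x xS; rewrite inE (subsetP sub) // inE gK.
by apply/setP=> x; rewrite -defS !inE fK.
Qed.

Lemma triangle_at_from_preimage (S : {set T2}) :
  triangle_at e1 (f @^-1: S) -> triangle_at e2 S.
Proof.
move=> tri u v uv uS vS.
have [s sS /andP[su sv]] : exists2 s, s \in f @^-1: S & e1 s (g u) && e1 s (g v).
  by apply: tri; rewrite ?inE ?gK // -f_mono !gK.
exists (f s); first by rewrite inE in sS.
by rewrite -[u]gK -[v]gK !f_mono su sv.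
Qed.

Lemma iso_triangle : triangle e1 -> triangle e2.
Proof.
by move=> tri S mS; apply/triangle_at_from_preimage/tri/maximal_stable_preimage.
Qed.

End Isomorphism.

Lemma triangle_compl_compl (T : finType) (e : rel T) :
  irreflexive e -> triangle e -> triangle (compl_rel (compl_rel e)).
Proof.
by move=> e_irr; apply: (@iso_triangle _ _ _ _ id id) => // x y; rewrite compl_relK.
Qed.

Definition sum_swap {T1 T2 : Type} (x : T1 + T2) : T2 + T1 :=
  match x with inl a => inr a | inr b => inl b end.

Lemma sum_swapK (T1 T2 : Type) : cancel (@sum_swap T1 T2) (@sum_swap T2 T1).
Proof. by case. Qed.

Lemma union_rel_swap (T1 T2 : finType) (e1 : rel T1) (e2 : rel T2) :
  {mono @sum_swap T2 T1 : x y / union_rel e2 e1 x y >-> union_rel e1 e2 x y}.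
Proof. by case=> ? []. Qed.

Lemma union_rel_sym (T1 T2 : finType) (e1 : rel T1) (e2 : rel T2) :
  symmetric e1 -> symmetric e2 -> symmetric (union_rel e1 e2).
Proof. by move=> sym1 sym2 [a|b] [a'|b'] /=. Qed.

(* The second hypothesis holds for a disjoint union, and for its complement
   when [S] has no right vertex. *)
Lemma maximal_stable_inl (T1 T2 : finType) (e1 : rel T1) (e : rel (T1 + T2))
    (S : {set T1 + T2}) :
  {mono inl : x y / e1 x y >-> e x y} ->
  (forall a b, inr b \in S -> ~~ e (inl a) (inr b) && ~~ e (inr b) (inl a)) ->
  maximal_stable e S -> maximal_stable e1 [set a | inl a \in S].
Proof.
move=> inl_mono sep [stS maxS]; split=> [x y|S' stS' sub].
  by rewrite !inE -inl_mono; apply: stS.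
pose C := [set x | if x is inl a then a \in S' else x \in S].
have stC : stable e C.
  move=> [a|b] [a'|b']; rewrite !inE => xC yC.
  - by rewrite inl_mono; apply: stS'.
  - by case/andP: (sep a b' yC).
  - by case/andP: (sep a' b xC).
  - exact: stS.
have defC : C = S.
  apply: maxS stC _; apply/subsetP=> -[a|b] xS; rewrite inE //.
  by rewrite (subsetP sub) // inE.
by apply/setP=> a; rewrite -defC !inE.
Qed.

Lemma union_rel_triangle (T1 T2 : finType) (e1 : rel T1) (e2 : rel T2) :
  triangle e1 -> triangle e2 -> triangle (union_rel e1 e2).
Proof.
move=> tri1 tri2 S mS.
have mS1 : maximal_stable e1 [set a | inl a \in S] by apply: maximal_stable_inl mS.
have mS2 : maximal_stable e2 [set b | inr b \in S].
  have mSswap := maximal_stable_preimage (union_rel_swap e1 e2)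
    (@sum_swapK _ _) (@sum_swapK _ _) mS.
  have -> : [set b | inr b \in S] = [set b | inl b \in @sum_swap T2 T1 @^-1: S].
    by apply/setP=> b; rewrite !inE.
  exact: maximal_stable_inl mSswap.
move=> [a|b] [a'|b'] //= uv uS vS.
  by have [||s] := tri1 _ mS1 a a' uv; rewrite ?inE // => sS; exists (inl s).
by have [||s] := tri2 _ mS2 b b' uv; rewrite ?inE // => sS; exists (inr s).
Qed.

Lemma compl_union_triangle_at_inl (T1 T2 : finType) (e1 : rel T1) (e2 : rel T2) S a0 :
  symmetric e1 -> triangle (compl_rel e1) ->
  maximal_stable (compl_rel (union_rel e1 e2)) S -> inl a0 \in S ->
  triangle_at (compl_rel (union_rel e1 e2)) S.
Proof.
move=> sym1 tri1 mS a0S.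
have noR b : inr b \notin S by apply/negP => /(proj1 mS _ _ a0S).
set S1 := [set a | inl a \in S].
have mS1 : maximal_stable (compl_rel e1) S1.
  by apply: maximal_stable_inl mS => // a b bS; case/negP: (noR b).
have mixed a b : inl a \notin S -> exists2 s, s \in S &
    compl_rel (union_rel e1 e2) s (inl a) && compl_rel (union_rel e1 e2) s (inr b).
  move=> aS; have aS1 : a \notin S1 by rewrite inE.
  have [c cS1 ca] := maximal_stable_dominating (compl_rel_irr e1) (compl_rel_sym sym1) mS1 aS1.
  by exists (inl c); [rewrite inE in cS1 | apply/andP].
move=> [a|b] [a'|b'] uv uS vS.
- by have [||s] := tri1 _ mS1 a a' uv; rewrite ?inE // => sS; exists (inl s).
- exact: mixed.
- by have [s sS su] := mixed a' b vS; exists s; rewrite // andbC.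
- by exists (inl a0).
Qed.

Lemma compl_union_triangle (T1 T2 : finType) (e1 : rel T1) (e2 : rel T2) :
  symmetric e1 -> symmetric e2 -> triangle (compl_rel e1) -> triangle (compl_rel e2) ->
  triangle (compl_rel (union_rel e1 e2)).
Proof.
move=> sym1 sym2 tri1 tri2 S mS u v uv uS vS.
have csym := compl_rel_sym (union_rel_sym sym1 sym2).
have [[a|b] xS _] := maximal_stable_dominating (compl_rel_irr _) csym mS uS.
  exact: compl_union_triangle_at_inl sym1 tri1 mS xS _ _ uv uS vS.
have swap_mono := compl_rel_mono (can_inj (@sum_swapK T2 T1)) (union_rel_swap e1 e2).
have mSswap := maximal_stable_preimage swap_mono (@sum_swapK _ _) (@sum_swapK _ _) mS.
apply: triangle_at_from_preimage swap_mono (@sum_swapK _ _) _ _ _ _ uv uS vS.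
by apply: (compl_union_triangle_at_inl (a0 := b) sym2 tri2 mSswap); rewrite inE.
Qed.

Lemma LK_adj_sym : symmetric LK_adj.
Proof. by move=> x y; rewrite /LK_adj eq_sym (eq_sym x.1) (eq_sym x.2). Qed.

Lemma LK_adj_fst_neq x y : x.1 != y.1 -> LK_adj x y = (x.2 == y.2).
Proof.
by case: x y => [i j] [i' j'] /= /negPf ii'; rewrite /LK_adj xpair_eqE /= ii'.
Qed.

Lemma LK_adj_snd_neq x y : x.2 != y.2 -> LK_adj x y = (x.1 == y.1).
Proof.
by case: x y => [i j] [i' j'] /= /negPf jj'; rewrite /LK_adj xpair_eqE /= jj' andbF orbF.
Qed.

Lemma L_adj_sym : symmetric L_adj.
Proof. by case=> [a|E] [b|F] //=; rewrite LK_adj_sym. Qed.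

Lemma L_adj_irr : irreflexive L_adj.
Proof. by case=> [a|E] //=; rewrite /LK_adj eqxx. Qed.

Lemma compl_L_adj_sym : symmetric (compl_rel L_adj).
Proof. exact: compl_rel_sym L_adj_sym. Qed.

Lemma is_LK_edge_pair a b : LK_adj a b -> is_LK_edge [set a; b].
Proof. by move=> ab; apply/existsP; exists a; apply/existsP; exists b; rewrite ab eqxx. Qed.

Lemma LK_edge_other (E : LK_edge) a :
  a \in val E -> exists2 c, val E = [set a; c] & LK_adj a c.
Proof.
case: E => /= E /existsP[a' /existsP[b /andP[a'b /eqP->]]].
by rewrite !inE => /orP[] /eqP->; [exists b | exists a'; rewrite 1?setUC 1?LK_adj_sym].
Qed.

Lemma LK_edge_adj (E : LK_edge) c d :
  c \in val E -> d \in val E -> c != d -> LK_adj c d.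
Proof.
move=> cE; have [c' -> cc'] := LK_edge_other cE.
by rewrite !inE => /orP[] /eqP->; rewrite ?eqxx.
Qed.

Lemma card_LK_edge (E : LK_edge) : #|val E| <= 2.
Proof.
by case: E => /= E /existsP[a /existsP[b /andP[_ /eqP->]]]; rewrite cards2 ltnS leq_b1.
Qed.

Lemma maximal_stable_L_subdivision (S : {set Lvert}) (E : LK_edge) :
  maximal_stable L_adj S -> inr E \notin S -> exists2 c, c \in val E & inl c \in S.
Proof.
move=> mS ES.
by have [[c|F] cS cE //] := maximal_stable_dominating L_adj_irr L_adj_sym mS ES; exists c.
Qed.

Lemma L_triangle_at_subdivision (S : {set Lvert}) (a : LK) (E : LK_edge) :
  maximal_stable L_adj S -> a \in val E -> inl a \notin S -> inr E \notin S ->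
  exists2 s, s \in S & L_adj s (inl a) && L_adj s (inr E).
Proof.
move=> mS aE aS ES; have [c defE ac] := LK_edge_other aE.
have [cS | cS] := boolP (inl c \in S).
  by exists (inl c); rewrite //= LK_adj_sym ac defE !inE eqxx orbT.
have [d] := maximal_stable_L_subdivision mS ES.
by rewrite defE !inE => /orP[] /eqP->; rewrite ?(negPf aS) ?(negPf cS).
Qed.

Lemma L_triangle : triangle L_adj.
Proof.
move=> S mS [a|E] [b|F] //= uv uS vS.
- pose w : Lvert := inr (Sub [set a; b] (is_LK_edge_pair uv)).
  have [wS | wS] := boolP (w \in S).
    by exists w; rewrite //= !inE !eqxx orbT.
  have [c] := maximal_stable_L_subdivision mS wS.
  by rewrite !inE => /orP[] /eqP->; rewrite ?(negPf uS) ?(negPf vS).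
- exact: L_triangle_at_subdivision.
- by have [s sS] := L_triangle_at_subdivision mS uv vS uS; exists s; rewrite // andbC.
Qed.

Definition LK_row (i : 'I_5) : {set LK} := setX [set i] setT.
Definition LK_col (j : 'I_6) : {set LK} := setX setT [set j].
Definition LK_line (A : {set LK}) : Prop :=
  (exists i, A = LK_row i) \/ (exists j, A = LK_col j).

Lemma LK_line_card A : LK_line A -> 4 < #|A|.
Proof. by case=> -[? ->]; rewrite cardsX cards1 cardsT card_ord. Qed.

Lemma LK_line_clique A : LK_line A -> clique LK_adj A.
Proof.
case=> -[k ->] [i j] [i' j']; rewrite !in_setX !inE /= ?andbT => /eqP-> /eqP-> neq;
  by rewrite /LK_adj neq eqxx ?orbT.
Qed.

Lemma card_LK_line_adj A c : LK_line A -> c \notin A ->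
  #|[set x in A | LK_adj x c]| <= 1.
Proof.
case=> -[k ->]; case: c => i j; rewrite in_setX !inE /= ?andbT => ck.
  apply: leq_trans (_ : #|[set (k, j)]| <= 1); last by rewrite cards1.
  apply/subset_leq_card/subsetP => -[i' j'].
  rewrite !inE /= andbT => /andP[/eqP-> ].
  by rewrite LK_adj_fst_neq => [/= /eqP->|] //; rewrite eq_sym.
apply: leq_trans (_ : #|[set (i, k)]| <= 1); last by rewrite cards1.
apply/subset_leq_card/subsetP => -[i' j'].
rewrite !inE /= => /andP[/eqP-> ].
by rewrite LK_adj_snd_neq => [/= /eqP->|] //; rewrite eq_sym.
Qed.

Lemma LK_clique_sub_line (P : {set LK}) x0 :
  clique LK_adj P -> x0 \in P -> exists2 A, LK_line A & P \subset A.
Proof.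
move=> clP; case: x0 => i j ijP.
have same2 x y : x \in P -> y \in P -> x.1 != y.1 -> x.2 = y.2.
  move=> xP yP neq1; apply/eqP; rewrite -LK_adj_fst_neq //.
  by apply: clP => //; apply: contraNneq neq1 => ->.
have [rowP | /subsetPn[[k m] kmP]] := boolP (P \subset LK_row i).
  by exists (LK_row i) => //; left; exists i.
rewrite !inE /= andbT => ki.
exists (LK_col j); first by right; exists j.
apply/subsetP => -[k' m'] kmP'; rewrite !inE /=.
have [k'i | k'i] := eqVneq k' i; last by apply/eqP; apply: same2 kmP' ijP k'i.
rewrite k'i in kmP'.
have -> : m' = m by apply: same2 kmP' kmP _; rewrite eq_sym.
by apply/eqP; apply: same2 kmP ijP ki.
Qed.

Lemma exists_notin_setU (T : finType) (A P Q : {set T}) :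
  #|P| + #|Q| < #|A| -> exists2 x, x \in A & x \notin P :|: Q.
Proof.
move=> cardA; apply/subsetPn; apply: contraTN cardA => /subset_leq_card AsubPQ.
by rewrite -leqNgt (leq_trans AsubPQ) // leq_card_setU.
Qed.

Lemma compl_L_subdivision_isolated (S : {set Lvert}) (E : LK_edge) w :
  maximal_stable (compl_rel L_adj) S -> inr E \in S -> w \notin S ->
  ~~ L_adj (inr E) w.
Proof.
move=> mS ES wS; have clS := (stable_compl_clique _ _).1 (proj1 mS).
case: w wS => [c|F] wS //=; apply/negP => cE.
have [[d|F] dS] := maximal_stable_dominating (compl_rel_irr _)
  compl_L_adj_sym mS wS; rewrite /compl_rel /=.
  have dE : d \in val E by apply: (clS (inr E) (inl d)).
  case/andP=> dc /negP; apply; rewrite LK_adj_sym.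
  by apply: LK_edge_adj cE dE _; rewrite eq_sym.
by case: (eqVneq F E) => [-> | /(clS _ _ dS ES)]; rewrite ?cE.
Qed.

Lemma maximal_L_clique_line (S : {set Lvert}) x0 :
  maximal_stable (compl_rel L_adj) S -> (forall E, inr E \notin S) ->
  inl x0 \in S -> exists2 A, LK_line A & S = inl @: A.
Proof.
move=> [stS maxS] noE x0S; have clS := (stable_compl_clique _ _).1 stS.
have [A lineA PA] : exists2 A, LK_line A & [set x | inl x \in S] \subset A.
  apply: (@LK_clique_sub_line _ x0); last by rewrite inE.
  by move=> x y; rewrite !inE => xS yS xy; apply: (clS (inl x) (inl y)).
exists A => //; apply/esym/maxS.
  apply/stable_compl_clique => _ _ /imsetP[x xA ->] /imsetP[y yA ->] xy.
  exact: (LK_line_clique lineA xA yA xy).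
apply/subsetP => -[x|E] xS; last by rewrite (negPf (noE E)) in xS.
by apply: imset_f; apply: (subsetP PA); rewrite inE.
Qed.

Lemma card_L_line_adj A w : LK_line A -> w \notin inl @: A ->
  #|[set x in A | L_adj (inl x) w]| <= 2.
Proof.
case: w => [c|E] lineA wA.
  apply: leq_trans (card_LK_line_adj lineA _) _ => //.
  by apply: contra wA => cA; apply: imset_f.
apply: leq_trans (card_LK_edge E); apply/subset_leq_card/subsetP => x.
by rewrite inE => /andP[].
Qed.

Lemma compl_L_triangle : triangle (compl_rel L_adj).
Proof.
move=> S mS u v uv uS vS.
suff [s sS [su sv]] : exists2 s, s \in S & ~~ L_adj s u /\ ~~ L_adj s v.
  have neqS x y : x \in S -> y \notin S -> x != y by move=> xS; apply: contraNneq => <-.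
  by exists s; rewrite // /compl_rel su sv (neqS s u) ?(neqS s v).
have [/existsP[E ES] | /existsPn noE] := boolP [exists E, inr E \in S].
  by exists (inr E) => //; split; apply: compl_L_subdivision_isolated mS ES _.
have [[x0|E] x0S _] := maximal_stable_dominating (compl_rel_irr _)
  compl_L_adj_sym mS uS; last by rewrite (negPf (noE E)) in x0S.
have [A lineA defS] := maximal_L_clique_line mS noE x0S.
rewrite defS in uS vS.
have [x xA] := exists_notin_setU (leq_ltn_trans (leq_add (card_L_line_adj lineA uS)
  (card_L_line_adj lineA vS)) (LK_line_card lineA)).
rewrite !inE xA /= negb_or => /andP[xu xv].
by exists (inl x); rewrite // defS imset_f.
Qed.

Theorem proposition39 : cap_triangle LLbar_adj.
Proof.
split; first exact: union_rel_triangle L_triangle compl_L_triangle.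
apply: compl_union_triangle L_adj_sym compl_L_adj_sym compl_L_triangle _.
exact: triangle_compl_compl L_adj_irr L_triangle.
Qed.
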